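(* For every regular expression $R$ and every database $D$, $\llbracket R\rrbracket_{BT}(D)=\pi_D\circ\mathrm{bindingtrail}\circ\mathrm{match}_{\mathcal{A}}(D)$ (as bags), where $\mathcal{A}=Gl(R)$, $\mathrm{match}_{\mathcal{A}}(D)$ is the bag of all runs of $D\times\mathcal{A}$, and $\mathrm{bindingtrail}$ is the filter keeping exactly the runs $(n_0,q_0)(e_0,\delta_0)(n_1,q_1)\cdots(e_{k-1},\delta_{k-1})(n_k,q_k)$ in which the pairs $(e_i,q_{i+1})$, $0\le i<k$, are pairwise distinct.
   Context: A database is $D=(\Sigma,V,E,\mathrm{src},\mathrm{tgt},\mathrm{lbl})$ with finite alphabet $\Sigma$, finite vertex set $V$, finite edge set $E$, $\mathrm{src},\mathrm{tgt}:E\to V$, $\mathrm{lbl}:E\to2^\Sigma$; walks are alternating sequences $(n_0,e_0,\dots,e_{k-1},n_k)$ with $\mathrm{src}(e_i)=n_i$, $\mathrm{tgt}(e_i)=n_{i+1}$, and $\mathrm{lbl}(w)=\{u_0\cdots u_{k-1}:u_i\in\mathrm{lbl}(e_i)\}$. Regular expressions over $\Sigma$: $R::=\varepsilon\mid a\mid R^*\mid R\cdot R\mid R+R$ ($a\in\Sigma$). A linearisation $R'$ of $R$ replaces each atom occurrence by a distinct fresh symbol (a position) from an alphabet $\Gamma$; for $\alpha\in\Gamma$, $\overline{\alpha}\in\Sigma$ is the letter it replaced, extended to words. The Glushkov automaton $Gl(R)$ is the trim part of $(\Sigma,\{i\}\uplus\Gamma,\Delta,\{i\},F)$ with $\Delta=\{(\alpha,\overline\beta,\beta):\exists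 u,v\in\Gamma^*,\ u\alpha\beta v\in L(R')\}\cup\{(i,\overline\alpha,\alpha):\exists u\in\Gamma^*,\ \alpha u\in L(R')\}$ and $F=\{\alpha:\exists u,\ u\alpha\in L(R')\}\cup(\{i\}$ if $\varepsilon\in L(R'))$. For an automaton $\mathcal{A}=(\Sigma,Q,\Delta,I,F)$ the run database $D\times\mathcal{A}$ has vertices $V\times Q$ and edges $(e,\delta)$ with $e\in E$, $\delta=(q,a,q')\in\Delta$, $a\in\mathrm{lbl}(e)$, from $(\mathrm{src}(e),q)$ to $(\mathrm{tgt}(e),q')$; runs are its walks from $V\times I$ to $V\times F$; $\pi_D$ projects to $D$. A binding trail of $D$ matching $R$ is a sequence $(e_1,\alpha_1)\cdots(e_n,\alpha_n)\in(E\times\Gamma)^*$ such that $e_1\cdots e_n$ forms a walk of $D$, $\overline{\alpha_1\cdots\alpha_n}\in\mathrm{lbl}(e_1\cdots e_n)$, $\alpha_1\cdots\alpha_n\in L(R')$, and the pairs $(e_i,\alpha_i)$ are pairwise distinct. The binding-trail semantics $\llbracket R\rrbracket_{BT}(D)$ is the bag of projections $\pi_D$ (onto the walk $e_1\cdots e_n$) of all binding trails of $D$ matching $R$. *)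

From Stdlib Require Import List.
From mathcomp Require Import all_boot.


Unset Printing Implicit Defensive.

Inductive regex (A : Type) : Type :=
| REps : regex A
| RAtom : A -> regex A
| RStar : regex A -> regex A
| RCat : regex A -> regex A -> regex A
| RPlus : regex A -> regex A -> regex A.
Arguments REps {A}. Arguments RAtom {A}. Arguments RStar {A}. Arguments RCat {A}. Arguments RPlus {A}.

Inductive lang {A : Type} : regex A -> seq A -> Prop :=
| L_eps : lang REps [::]
| L_atom a : lang (RAtom a) [:: a]
| L_star0 r : lang (RStar r) [::]
| L_starS r u v : lang r u -> lang (RStar r) v -> lang (RStar r) (u ++ v)
| L_cat r s u v : lang r u -> lang s v -> lang (RCat r s) (u ++ v)
| L_plusl r s u : lang r u -> lang (RPlus r s) u
| L_plusr r s u : lang s u -> lang (RPlus r s) u.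

(* ---------- Linearisation ----------
   Positions are pairs (k, a): k is the (fresh, distinct) index of the atom
   occurrence, a the letter it replaced; hence  bar (k, a) = a. *)
Definition pos (S : Type) := (nat * S)%type.
Definition bar {S : Type} (p : pos S) : S := p.2.

Fixpoint lin {S : Type} (r : regex S) (k : nat) : regex (pos S) * nat :=
  match r with
  | REps => (REps, k)
  | RAtom a => (RAtom (k, a), k.+1)
  | RStar r1 => let (r1', k1) := lin r1 k in (RStar r1', k1)
  | RCat r1 r2 =>
      let (r1', k1) := lin r1 k in let (r2', k2) := lin r2 k1 in (RCat r1' r2', k2)
  | RPlus r1 r2 =>
      let (r1', k1) := lin r1 k in let (r2', k2) := lin r2 k1 in (RPlus r1' r2', k2)
  end.

Definition linearise {S : Type} (r : regex S) : regex (pos S) := (lin r 0).1.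

Record automaton (S : Type) := Automaton {
  aQ : Type;
  aDelta : aQ -> S -> aQ -> Prop;
  aInit : aQ -> Prop;
  aFinal : aQ -> Prop }.
Arguments aQ {S}. Arguments aDelta {S a}. Arguments aInit {S a}. Arguments aFinal {S a}.

(* the untrimmed Glushkov automaton: states {i} + Gamma, with i = None *)
Definition glDelta {S : Type} (R : regex S) (q : option (pos S)) (a : S)
    (q' : option (pos S)) : Prop :=
  match q, q' with
  | Some al, Some be => a = bar be /\
      exists u v, lang (linearise R) (u ++ al :: be :: v)
  | None, Some al => a = bar al /\ exists u, lang (linearise R) (al :: u)
  | _, None => False
  end.
Definition glInit {S : Type} (q : option (pos S)) : Prop := q = None.
Definition glFinal {S : Type} (R : regex S) (q : option (pos S)) : Prop :=
  match q with
  | Some al => exists u, lang (linearise R) (rcons u al)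
  | None => lang (linearise R) [::]
  end.

Inductive reach {Q S : Type} (d : Q -> S -> Q -> Prop) : Q -> Q -> Prop :=
| reach_refl q : reach d q q
| reach_step q a q' q'' : d q a q' -> reach d q' q'' -> reach d q q''.

Definition gl_useful {S : Type} (R : regex S) (q : option (pos S)) : Prop :=
  (exists q0, glInit q0 /\ reach (glDelta R) q0 q) /\
  (exists qf, glFinal R qf /\ reach (glDelta R) q qf).

Definition glQ {S : Type} (R : regex S) := {q : option (pos S) | gl_useful R q}.

Definition Gl {S : Type} (R : regex S) : automaton S :=
  @Automaton S (glQ R)
    (fun q a q' => glDelta R (proj1_sig q) a (proj1_sig q'))
    (fun q => glInit (proj1_sig q))
    (fun q => glFinal R (proj1_sig q)).

Record database (S : finType) := Database {
  dV : finType;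
  dE : finType;
  src : dE -> dV;
  tgt : dE -> dV;
  lbl : dE -> {set S} }.
Arguments dV {S}. Arguments dE {S}. Arguments src {S d}. Arguments tgt {S d}. Arguments lbl {S d}.

(* a walk (n0, e0, n1, ..., n_k) is represented by its start vertex and its
   edge sequence (the intermediate vertices are determined by tgt) *)
Definition walk {S : finType} (D : database S) := (dV D * seq (dE D))%type.

Fixpoint is_walk_from {S : finType} (D : database S) (n : dV D) (es : seq (dE D))
  : Prop :=
  match es with
  | [::] => True
  | e :: es' => src e = n /\ is_walk_from D (tgt e) es'
  end.

Definition is_walk {S : finType} (D : database S) (w : walk D) : Prop :=
  is_walk_from D w.1 w.2.

Definition in_lbl_walk {S : finType} (D : database S) (es : seq (dE D)) (u : seq S)
  : Prop := size es = size u /\ forall i, i < size es ->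
     forall e a, nth_error es i = Some e -> nth_error u i = Some a -> a \in lbl e.

Definition btrail {S : finType} (D : database S) :=
  (dV D * seq (dE D * pos S))%type.

Definition is_binding_trail {S : finType} (D : database S) (R : regex S)
    (t : btrail D) : Prop :=
  is_walk D (t.1, map fst t.2) /\
  in_lbl_walk D (map fst t.2) (map bar (map snd t.2)) /\
  lang (linearise R) (map snd t.2) /\
  NoDup t.2.

Definition pi_bt {S : finType} (D : database S) (t : btrail D) : walk D :=
  (t.1, map fst t.2).

Definition run {S : finType} (D : database S) (A : automaton S) :=
  ((dV D * aQ A) * seq (dE D * (aQ A * S * aQ A)))%type.

Fixpoint is_prod_walk_from {S : finType} (D : database S) (A : automaton S)
    (n : dV D) (q : aQ A) (es : seq (dE D * (aQ A * S * aQ A))) : Prop :=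
  match es with
  | [::] => True
  | (e, (p, a, p')) :: es' =>
      aDelta p a p' /\ a \in lbl e /\ src e = n /\ p = q /\
      is_prod_walk_from D A (tgt e) p' es'
  end.

Definition last_state {S : finType} (D : database S) (A : automaton S)
    (q0 : aQ A) (es : seq (dE D * (aQ A * S * aQ A))) : aQ A :=
  last q0 (map (fun x => x.2.2) es).

Definition is_run {S : finType} (D : database S) (A : automaton S) (r : run D A)
  : Prop :=
  aInit r.1.2 /\ is_prod_walk_from D A r.1.1 r.1.2 r.2 /\
  aFinal (last_state D A r.1.2 r.2).

Definition bindingtrail_filter {S : finType} (D : database S) (A : automaton S)
    (r : run D A) : Prop :=
  NoDup (map (fun x => (x.1, x.2.2)) r.2).

Definition pi_run {S : finType} (D : database S) (A : automaton S) (r : run D A)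
  : walk D := (r.1.1, map fst r.2).

(* ---------- Bags ----------
   A bag of elements of W is given by an index type I and a map I -> W; two
   bags are equal when every w has equinumerous fibres (same multiplicity). *)
Definition bag_eq {W I J : Type} (f : I -> W) (g : J -> W) : Prop :=
  forall w : W, exists (h : {i : I | f i = w} -> {j : J | g j = w})
                       (k : {j : J | g j = w} -> {i : I | f i = w}),
    (forall x, k (h x) = x) /\ (forall y, h (k y) = y).

Definition BT_sem {S : finType} (D : database S) (R : regex S) :
  {t : btrail D | is_binding_trail D R t} -> walk D :=
  fun t => pi_bt D (proj1_sig t).

Definition run_sem {S : finType} (D : database S) (A : automaton S) :
  {r : run D A | is_run D A r /\ bindingtrail_filter D A r} -> walk D :=
  fun r => pi_run D A (proj1_sig r).

From Stdlib Require Import FinFun ProofIrrelevance ClassicalEpsilon.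
From mathcomp Require Import all_boot.

Set Implicit Arguments.
Unset Strict Implicit.
Unset Printing Implicit Defensive.

(* Positions of a linearised expression are pairwise distinct, so its
   language is local: a nonempty word of positions lies in L(R') as soon as it
   starts with a first position, ends with a last position, and any two
   consecutive positions follow each other (induction on R; distinctness keeps
   the two operands of a sum or concatenation apart).  These are exactly the
   conditions for the word to spell a path of the Glushkov automaton from i to
   a final state, the state reached after reading a position being that very
   position.  Hence a run of D x Gl(R) is a walk of D together with a word of
   L(R') readable along it, i.e. a binding trail, and the state q_(i+1) reached
   through e_i is the position alpha_i, so the bindingtrail filter is the
   distinctness of the pairs (e_i, alpha_i).  The two translations are mutually
   inverse and commute with the projections to D. *)

Fixpoint atoms {A : Type} (r : regex A) : seq A :=
  match r with
  | REps => [::]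
  | RAtom a => [:: a]
  | RStar r1 => atoms r1
  | RCat r1 r2 | RPlus r1 r2 => atoms r1 ++ atoms r2
  end.

Section Chains.
Variable T : Type.
Implicit Types (e f j : T -> T -> Prop) (A : T -> Prop) (x : T) (w : seq T).

Fixpoint chain e x w : Prop :=
  if w is y :: w' then e x y /\ chain e y w' else True.

Lemma chain_in A e f x w :
  (forall a b, A a -> e a b -> f a b /\ A b) -> A x -> chain e x w ->
  chain f x w /\ A (last x w).
Proof.
move=> step; elim: w x => [|y w IH] x //= Ax [exy ch].
have [fxy Ay] := step x y Ax exy.
by have [] := IH y Ay ch.
Qed.

Lemma chain_split A e f j x w :
  (forall a b, A a -> e a b -> (f a b /\ A b) \/ j a b) -> A x -> chain e x w ->
  (chain f x w /\ A (last x w)) \/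
  exists w1 y w2, [/\ w = w1 ++ y :: w2, chain f x w1, j (last x w1) y & chain e y w2].
Proof.
move=> step; elim: w x => [|y w IH] x Ax /=; first by left.
case=> exy ch; case: (step x y Ax exy) => [[fxy Ay]|jxy]; last first.
  by right; exists [::], y, w.
case: (IH y Ay ch) => [[chf A_last]|[w1 [z [w2 [-> ch1 j1 ch2]]]]]; first by left.
by right; exists (y :: w1), z, w2.
Qed.

End Chains.

Lemma cat_pair_split (T : eqType) (u v a b : seq T) x y :
  u ++ x :: y :: v = a ++ b ->
  (exists a', a = u ++ x :: y :: a') \/
  (a = rcons u x /\ b = y :: v) \/
  (exists b', b = b' ++ x :: y :: v).
Proof.
elim: a u => [|z a IH] u /=; first by move=> <-; right; right; exists u.
case: u => [|z0 u] /=.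
  case=> <-; case: a {IH} => [|z' a] /=; first by move=> <-; right; left.
  by case=> <- _; left; exists a.
case=> <- /IH [[a' ->]|[[-> ->]|[b' ->]]].
- by left; exists a'.
- by right; left.
- by right; right; exists b'.
Qed.

Section LocalLanguage.
Variable P : eqType.
Implicit Types (r s t : regex P) (u v w : seq P) (x y z : P).

Definition is_first r x := exists u, lang r (x :: u).
Definition is_last r x := exists u, lang r (rcons u x).
Definition follows r x y := exists u v, lang r (u ++ x :: y :: v).

Lemma lang_atoms r w x : lang r w -> x \in w -> x \in atoms r.
Proof.
elim=> {r w} //= [r u v _ IHu _ IHv|r s u v _ IHu _ IHv|r s u _ IHu|r s u _ IHu].
- by rewrite mem_cat => /orP[/IHu|/IHv].
- by rewrite !mem_cat => /orP[/IHu ->|/IHv ->]; rewrite ?orbT.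
- by move/IHu; rewrite mem_cat => ->.
- by move/IHu; rewrite mem_cat => ->; rewrite orbT.
Qed.

Lemma is_first_atoms r x : is_first r x -> x \in atoms r.
Proof. by case=> u /lang_atoms; apply; rewrite mem_head. Qed.

Lemma is_last_atoms r x : is_last r x -> x \in atoms r.
Proof. by case=> u /lang_atoms; apply; rewrite mem_rcons mem_head. Qed.

Lemma follows_atoms r x y : follows r x y -> x \in atoms r /\ y \in atoms r.
Proof.
by case=> u [v] /lang_atoms in_r; split; apply: in_r; rewrite mem_cat !inE eqxx ?orbT.
Qed.

Lemma lang_star1 r w : lang r w -> lang (RStar r) w.
Proof. by move=> Hw; rewrite -[w]cats0; apply: L_starS Hw (L_star0 r). Qed.

Lemma lang_star_ind r (Q : seq P -> Prop) :
  Q [::] -> (forall u v, lang r u -> lang (RStar r) v -> Q v -> Q (u ++ v)) ->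
  forall w, lang (RStar r) w -> Q w.
Proof.
move=> Q0 QS w; move Et: (RStar r) => t Hw.
by elim: Hw Et => // r' u v Hu _ Hv IHv [Er]; subst r'; apply: QS => //; apply: IHv.
Qed.

Lemma star_first r x : is_first (RStar r) x -> is_first r x.
Proof.
case=> u Hw.
suff: forall w, lang (RStar r) w -> forall x u, w = x :: u -> is_first r x.
  by move/(_ _ Hw x u erefl).
apply: lang_star_ind => // [[|y u0]] v Hu _ IH x' u' /=; first exact: IH.
by case=> <- _; exists u0.
Qed.

Lemma star_last r x : is_last (RStar r) x -> is_last r x.
Proof.
case=> u Hw.
suff: forall w, lang (RStar r) w -> forall x u, w = rcons u x -> is_last r x.
  by move/(_ _ Hw x u erefl).
apply: lang_star_ind => [x' []|u0 v Hu _ IH x' u'] //.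
case/lastP: v IH => [|v y] IH; first by rewrite cats0 => Eu; exists u'; rewrite -Eu.
by rewrite -rcons_cat => /eqP; rewrite eqseq_rcons => /andP[_ /eqP <-]; apply: (IH y v).
Qed.

Lemma star_follows r x y :
  follows (RStar r) x y -> follows r x y \/ (is_last r x /\ is_first r y).
Proof.
case=> u [v] Hw.
suff: forall w, lang (RStar r) w -> forall u x y v, w = u ++ x :: y :: v ->
    follows r x y \/ (is_last r x /\ is_first r y).
  by move/(_ _ Hw u x y v erefl).
apply: lang_star_ind => [[]|u0 v0 Hu Hv IH u' x' y' v'] //.
case/esym/cat_pair_split => [[a' Eu0]|[[Eu0 Ev0]|[b' Ev0]]].
- by left; exists u', a'; rewrite -Eu0.
- right; split; first by exists u'; rewrite -Eu0.
  by apply: star_first; exists v'; rewrite -Ev0.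
- exact: (IH b' _ _ v').
Qed.

Lemma lang_atom_inv a w : lang (RAtom a) w -> w = [:: a].
Proof. by move=> Hw; inversion Hw. Qed.

Lemma lang_cat_inv r s w :
  lang (RCat r s) w -> exists u v, [/\ w = u ++ v, lang r u & lang s v].
Proof. by move=> Hw; inversion Hw; exists u, v. Qed.

Lemma lang_plus_inv r s w : lang (RPlus r s) w -> lang r w \/ lang s w.
Proof. by move=> Hw; inversion Hw; [left|right]. Qed.

Lemma cat_first r s x :
  is_first (RCat r s) x -> is_first r x \/ (lang r [::] /\ is_first s x).
Proof.
case=> u /lang_cat_inv [[|y u0] [v [/= Ew Hu Hv]]].
  by right; split => //; exists u; rewrite Ew.
by case: Ew => -> _; left; exists u0.
Qed.

Lemma cat_last r s x :
  is_last (RCat r s) x -> is_last s x \/ (is_last r x /\ lang s [::]).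
Proof.
case=> u /lang_cat_inv [u0 [v [Ew Hu Hv]]].
case/lastP: v Ew Hv => [|v y] Ew Hv.
  by right; split => //; exists u; rewrite Ew cats0.
move/eqP: Ew; rewrite -rcons_cat eqseq_rcons => /andP[_ /eqP ->].
by left; exists v.
Qed.

Lemma cat_follows r s x y : follows (RCat r s) x y ->
  [\/ follows r x y, follows s x y | is_last r x /\ is_first s y].
Proof.
case=> u [v] /lang_cat_inv [u0 [v0 [Ew Hu Hv]]].
case/cat_pair_split: Ew => [[a' Eu0]|[[Eu0 Ev0]|[b' Ev0]]].
- by apply: Or31; exists u, a'; rewrite -Eu0.
- by apply: Or33; split; [exists u; rewrite -Eu0|exists v; rewrite -Ev0].
- by apply: Or32; exists b', v; rewrite -Ev0.
Qed.

Definition is_local r := forall x w,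
  is_first r x -> is_last r (last x w) -> chain (follows r) x w -> lang r (x :: w).

Lemma local_eps : is_local REps.
Proof. by move=> x w [u Hu]; inversion Hu. Qed.

Lemma local_atom a : is_local (RAtom a).
Proof.
move=> x [|y w] [u /lang_atom_inv [-> _]] _ //=; first by move=> _; apply: L_atom.
by case=> [[u' [v' /lang_atom_inv]]]; case: u' => [|? []].
Qed.

Lemma local_star r : is_local r -> is_local (RStar r).
Proof.
move=> local_r x w; have [n] := ubnP (size w); elim: n x w => // n IHn x w.
rewrite ltnS => size_w first_x last_w chain_w.
have star_step a b : True -> follows (RStar r) a b ->
    (follows r a b /\ True) \/ (is_last r a /\ is_first r b).
  by move=> _ /star_follows [|]; [left|right].
(* Cut [x :: w] after its first maximal block of [follows r] steps. *)
case: (chain_split star_step I chain_w) => [[chain_r _]|].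
  by apply/lang_star1/local_r => //; [apply: star_first|apply: star_last].
move=> [w1 [y [w2 [Ew chain1 [last1 first2] chain2]]]].
rewrite {}Ew in size_w last_w *; rewrite -cat_cons; apply: L_starS.
  by apply: local_r => //; apply: star_first.
apply: IHn => //; first by apply: leq_trans size_w; rewrite size_cat /= addnS ltnS leq_addl.
  by case: first2 => u Hu; exists u; apply: lang_star1.
by rewrite last_cat in last_w.
Qed.

Lemma lang_of_confined_chain t r x w :
  (forall v z, lang t v -> z \in atoms r -> z \in v -> lang r v) -> is_local r ->
  x \in atoms r -> is_first t x -> is_last t (last x w) -> chain (follows t) x w ->
  lang r (x :: w).
Proof.
move=> confined local_r x_r [u first_x] [v last_w] chain_w.
have step a b : a \in atoms r -> follows t a b -> follows r a b /\ b \in atoms r.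
  move=> a_r [u' [v' Hw]]; have fab : follows r a b.
    by exists u', v'; apply: confined Hw a_r _; rewrite mem_cat mem_head orbT.
  by split => //; case: (follows_atoms fab).
have [chain_r last_in_r] := chain_in step x_r chain_w.
apply: local_r; first by exists u; apply: confined first_x x_r _; rewrite mem_head.
  by exists v; apply: confined last_w last_in_r _; rewrite mem_rcons mem_head.
exact: chain_r.
Qed.

Section Disjoint.
Variables r s : regex P.
Hypothesis disjoint_rs : ~~ has (mem (atoms r)) (atoms s).

Lemma atoms_disjoint z : z \in atoms r -> z \in atoms s -> False.
Proof. by move=> z_r z_s; move/hasPn/(_ z z_s)/negP: disjoint_rs; apply. Qed.

Lemma cat_first_r x : x \in atoms r -> is_first (RCat r s) x -> is_first r x.
Proof. by move=> x_r /cat_first [//|[_ /is_first_atoms /(atoms_disjoint x_r)]]. Qed.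

Lemma cat_first_s x :
  x \in atoms s -> is_first (RCat r s) x -> lang r [::] /\ is_first s x.
Proof. by move=> x_s /cat_first [/is_first_atoms /atoms_disjoint /(_ x_s)|]. Qed.

Lemma cat_last_r x : x \in atoms r -> is_last (RCat r s) x -> is_last r x /\ lang s [::].
Proof. by move=> x_r /cat_last [/is_last_atoms /(atoms_disjoint x_r)|]. Qed.

Lemma cat_last_s x : x \in atoms s -> is_last (RCat r s) x -> is_last s x.
Proof. by move=> x_s /cat_last [//|[/is_last_atoms /atoms_disjoint /(_ x_s)]]. Qed.

Lemma cat_follows_r a b : a \in atoms r -> follows (RCat r s) a b ->
  (follows r a b /\ b \in atoms r) \/ (is_last r a /\ is_first s b).
Proof.
move=> a_r /cat_follows [fab|/follows_atoms [a_s _]|]; last by right.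
- by left; split => //; case: (follows_atoms fab).
- by case: (atoms_disjoint a_r a_s).
Qed.

Lemma cat_follows_s a b :
  a \in atoms s -> follows (RCat r s) a b -> follows s a b /\ b \in atoms s.
Proof.
move=> a_s /cat_follows [/follows_atoms [a_r _]|fab|[/is_last_atoms a_r _]].
- by case: (atoms_disjoint a_r a_s).
- by split => //; case: (follows_atoms fab).
- by case: (atoms_disjoint a_r a_s).
Qed.

Lemma local_cat : is_local r -> is_local s -> is_local (RCat r s).
Proof.
move=> local_r local_s x w first_x last_w chain_w.
have s_part y v : y \in atoms s -> is_first s y -> is_last (RCat r s) (last y v) ->
    chain (follows (RCat r s)) y v -> lang s (y :: v).
  move=> y_s first_y last_v /(chain_in cat_follows_s y_s) [chain_s last_s].
  by apply: local_s => //; apply: cat_last_s.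
have := is_first_atoms first_x; rewrite mem_cat => /orP [x_r|x_s]; last first.
  have [eps_r first_s] := cat_first_s x_s first_x.
  by rewrite -[x :: w]cat0s; apply: L_cat eps_r (s_part _ _ x_s first_s last_w chain_w).
have first_r := cat_first_r x_r first_x.
case: (chain_split cat_follows_r x_r chain_w) => [[chain_r last_in_r]|].
  have [last_r eps_s] := cat_last_r last_in_r last_w.
  by rewrite -[x :: w]cats0; apply: L_cat eps_s; apply: local_r.
move=> [w1 [y [w2 [Ew chain1 [last1 first2] chain2]]]].
rewrite {}Ew last_cat /= in last_w *; rewrite -cat_cons; apply: L_cat; first exact: local_r.
exact: s_part (is_first_atoms first2) first2 last_w chain2.
Qed.

Lemma plus_lang_l v z : lang (RPlus r s) v -> z \in atoms r -> z \in v -> lang r v.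
Proof.
move=> /lang_plus_inv [//|Hv] z_r z_v.
by case: (atoms_disjoint z_r (lang_atoms Hv z_v)).
Qed.

Lemma plus_lang_r v z : lang (RPlus r s) v -> z \in atoms s -> z \in v -> lang s v.
Proof.
move=> /lang_plus_inv [Hv|//] z_s z_v.
by case: (atoms_disjoint (lang_atoms Hv z_v) z_s).
Qed.

Lemma local_plus : is_local r -> is_local s -> is_local (RPlus r s).
Proof.
move=> local_r local_s x w first_x last_w chain_w.
have := is_first_atoms first_x; rewrite mem_cat => /orP [x_r|x_s].
  by apply/L_plusl/(lang_of_confined_chain plus_lang_l).
by apply/L_plusr/(lang_of_confined_chain plus_lang_r).
Qed.

End Disjoint.

Lemma local_linear r : uniq (atoms r) -> is_local r.
Proof.
elim: r => [|a|r IHr|r IHr s IHs|r IHr s IHs] /=.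
- by move=> _; apply: local_eps.
- by move=> _; apply: local_atom.
- by move/IHr/local_star.
- by rewrite cat_uniq => /and3P [/IHr ? ? /IHs ?]; apply: local_cat.
- by rewrite cat_uniq => /and3P [/IHr ? ? /IHs ?]; apply: local_plus.
Qed.

End LocalLanguage.

Lemma lin_next (S : Type) (r : regex S) k : (lin r k).2 = k + size (atoms r).
Proof.
elim: r k => [|a|r IHr|r IHr s IHs|r IHr s IHs] k /=; rewrite ?addn0 ?addn1 //.
  by have := IHr k; case: (lin r k).
all: have := IHr k; case: (lin r k) => r1 k1 /= ->.
all: have := IHs (k + size (atoms r)); case: (lin s _) => r2 k2 /= ->.
all: by rewrite size_cat addnA.
Qed.

Lemma lin_atoms (S : Type) (r : regex S) k :
  map fst (atoms (lin r k).1) = iota k (size (atoms r)).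
Proof.
elim: r k => [|a|r IHr|r IHr s IHs|r IHr s IHs] k //=.
  by have := IHr k; case: (lin r k).
all: have := lin_next r k; have := IHr k; case: (lin r k) => r1 k1 /= IH1 ->.
all: have := IHs (k + size (atoms r)); case: (lin s _) => r2 k2 /= IH2.
all: by rewrite map_cat IH1 IH2 size_cat iotaD.
Qed.

Lemma linearise_uniq (S : eqType) (r : regex S) : uniq (atoms (linearise r)).
Proof. by apply: (@map_uniq _ _ fst); rewrite lin_atoms iota_uniq. Qed.

Lemma gl_delta_target (S : Type) (R : regex S) q a q' :
  glDelta R q a q' -> exists2 b, q' = Some b & a = bar b.
Proof. by case: q q' => [?|] [b|] //= [-> _]; exists b. Qed.

Section GlushkovPaths.
Variables (S : eqType) (R : regex S).
Local Notation L := (lang (linearise R)).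

Fixpoint gl_path (q : option (pos S)) (w : seq (pos S)) : Prop :=
  if w is a :: w' then glDelta R q (bar a) (Some a) /\ gl_path (Some a) w' else True.

Lemma gl_path_of_lang u w : L (u ++ w) -> gl_path (last None (map Some u)) w.
Proof.
elim: w u => [|a w IH] u //= Hw; split.
  case/lastP: u Hw => [|u z] Hw; first by split => //; exists w.
  by rewrite map_rcons last_rcons; split => //; exists u, w; rewrite -cat_rcons.
by move: (IH (rcons u a)); rewrite map_rcons last_rcons cat_rcons; apply.
Qed.

Lemma gl_final_of_lang w : L w -> glFinal R (last None (map Some w)).
Proof. by case/lastP: w => [|u a] //= Hw; rewrite map_rcons last_rcons; exists u. Qed.

Lemma lang_of_gl_path w : gl_path None w -> glFinal R (last None (map Some w)) -> L w.
Proof.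
case: w => [|a w] //= [[_ first_a] path_w]; rewrite last_map => last_w.
apply: (local_linear (linearise_uniq R)) first_a last_w _.
by elim: w a path_w => [|b w IH] a //= [[_ follow_ab] /IH].
Qed.

Lemma lang_linearise_gl w : L w <-> gl_path None w /\ glFinal R (last None (map Some w)).
Proof.
split; last by case; apply: lang_of_gl_path.
by move=> Hw; split; [apply: (@gl_path_of_lang [::])|apply: gl_final_of_lang].
Qed.

Lemma gl_path_reach q w : gl_path q w -> reach (glDelta R) q (last q (map Some w)).
Proof.
elim: w q => [|a w IH] q /=; first by move=> _; apply: reach_refl.
by case=> delta_qa /IH; apply: reach_step delta_qa.
Qed.

Lemma gl_path_prefix q u v : gl_path q (u ++ v) -> gl_path q u.
Proof. by elim: u q => [|a u IH] q //= [delta_qa /IH]. Qed.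

Lemma useful_prefix u v : L (u ++ v) -> gl_useful R (last None (map Some u)).
Proof.
move=> Huv; split.
  exists None; split => //; apply/gl_path_reach/(@gl_path_prefix _ _ v).
  exact: (@gl_path_of_lang [::]).
exists (last None (map Some (u ++ v))); split; first exact: gl_final_of_lang.
by rewrite map_cat last_cat; apply/gl_path_reach/gl_path_of_lang.
Qed.

Lemma useful_init w : L w -> gl_useful R None.
Proof. exact: (@useful_prefix [::]). Qed.

Lemma useful_mem w a : L w -> a \in w -> gl_useful R (Some a).
Proof.
move=> Hw a_w; case/splitPr: a_w Hw => u v Hw.
by move: (@useful_prefix (rcons u a) v); rewrite map_rcons last_rcons cat_rcons; apply.
Qed.

End GlushkovPaths.

Lemma in_lbl_walk_nil (S : finType) (D : database S) : in_lbl_walk D [::] [::].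
Proof. by split => // i. Qed.

Lemma in_lbl_walk_cons (S : finType) (D : database S) e es a u :
  in_lbl_walk D (e :: es) (a :: u) <-> a \in lbl e /\ in_lbl_walk D es u.
Proof.
rewrite /in_lbl_walk /=; split.
  by case=> [[size_eq] lbl_i]; split; [apply: (lbl_i 0)|split => // i; apply: (lbl_i i.+1)].
case=> a_e [size_eq lbl_i]; split; first by rewrite size_eq.
by case=> [|i] /= lt_i e' a'; [case=> <- [<-]|apply: lbl_i].
Qed.

Lemma sig_inj (A : Type) (Q : A -> Prop) (x y : {a | Q a}) : sval x = sval y -> x = y.
Proof. by apply: eq_sig_hprop => a; apply: proof_irrelevance. Qed.

Lemma bag_of_bij W I J (f : I -> W) (g : J -> W) (F : I -> J) (G : J -> I) :
  cancel F G -> cancel G F -> (forall i, g (F i) = f i) -> bag_eq f g.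
Proof.
move=> FK GK gF w.
exists (fun x => exist _ (F (sval x)) (etrans (gF _) (svalP x))).
exists (fun y => exist _ (G (sval y))
  (etrans (esym (gF _)) (etrans (congr1 g (GK _)) (svalP y)))).
by split => x; apply: sig_inj; rewrite /= ?FK ?GK.
Qed.

Section Runs.
Variables (S : finType) (R : regex S) (D : database S).
Local Notation edge := (dE D * (glQ R * S * glQ R))%type.

Definition useful_trail (l : seq (dE D * pos S)) :=
  {in map snd l, forall a, gl_useful R (Some a)}.

Lemma useful_trail_cons e a l :
  useful_trail ((e, a) :: l) -> gl_useful R (Some a) /\ useful_trail l.
Proof. by move=> Ul; split => [|b b_l]; apply: Ul; rewrite inE ?eqxx ?b_l ?orbT. Qed.

Section DefaultState.
Variable q0 : glQ R.

(* [q0] is a junk value for the states that are not useful, i.e. not in Gl(R). *)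
Definition gl_state (q : option (pos S)) : glQ R :=
  if excluded_middle_informative (gl_useful R q) is left Uq then exist _ q Uq else q0.

Lemma gl_stateE q : gl_useful R q -> sval (gl_state q) = q.
Proof. by rewrite /gl_state; case: excluded_middle_informative. Qed.

Lemma gl_state_sval q : gl_state (sval q) = q.
Proof.
rewrite /gl_state; case: excluded_middle_informative => [Uq|[]].
  exact: sig_inj.
exact: svalP.
Qed.

Fixpoint run_edges (q : option (pos S)) (l : seq (dE D * pos S)) : seq edge :=
  if l is (e, a) :: l' then
    (e, (gl_state q, bar a, gl_state (Some a))) :: run_edges (Some a) l'
  else [::].

Definition run_of_trail (t : btrail D) : run D (Gl R) :=
  ((t.1, gl_state None), run_edges None t.2).

Lemma map_fst_run_edges q l : map fst (run_edges q l) = map fst l.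
Proof. by elim: l q => [|[e a] l IH] q //=; rewrite IH. Qed.

Lemma prod_walk_run_edges n q l : gl_useful R q -> useful_trail l ->
  is_prod_walk_from D (Gl R) n (gl_state q) (run_edges q l) <->
  [/\ is_walk_from D n (map fst l), in_lbl_walk D (map fst l) (map bar (map snd l))
    & gl_path R q (map snd l)].
Proof.
elim: l n q => [|[e a] l IH] n q Uq Ul /=.
  by split=> // _; split=> //; apply: in_lbl_walk_nil.
have [Ua Ul'] := useful_trail_cons Ul.
have := IH (tgt e) (Some a) Ua Ul'.
have := in_lbl_walk_cons e (map fst l) (bar a) (map bar (map snd l)).
rewrite /= !gl_stateE // => -[lbl_to lbl_from] [walk_to walk_from]; split.
  case=> delta [a_e [src_e [_ /walk_to [walk_l lbl_l path_l]]]].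
  by split => //; apply: lbl_from.
case=> [[src_e walk_l] /lbl_to [a_e lbl_l] [delta path_l]].
by do !split => //; apply: walk_from.
Qed.

Lemma last_state_run_edges q l : gl_useful R q -> useful_trail l ->
  sval (last_state D (Gl R) (gl_state q) (run_edges q l)) = last q (map Some (map snd l)).
Proof.
rewrite /last_state; elim: l q => [|[e a] l IH] q Uq /= Ul; first exact: gl_stateE.
by have [Ua Ul'] := useful_trail_cons Ul; apply: IH.
Qed.

Lemma nodup_run_edges q l : useful_trail l ->
  List.NoDup (map (fun x => (x.1, x.2.2)) (run_edges q l)) <-> List.NoDup l.
Proof.
move=> Ul.
have -> : map (fun x => (x.1, x.2.2)) (run_edges q l) =
          map (fun y => (y.1, gl_state (Some y.2))) l.
  by elim: l q {Ul} => [|[e a] l IH] q //=; rewrite IH.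
have forget_proofs :
    map (fun z => (z.1, sval z.2)) (map (fun y => (y.1, gl_state (Some y.2))) l) =
    map (fun y => (y.1, Some y.2)) l.
  rewrite -map_comp; apply/eq_in_map => -[e a] ea_l /=.
  by rewrite gl_stateE //; apply/Ul/(map_f snd ea_l).
split => [/List.NoDup_map_inv //|nodup_l].
have inj : Injective (fun y : dE D * pos S => (y.1, Some y.2)).
  by move=> [e a] [e' a'] [-> ->].
have : List.NoDup (map (fun y => (y.1, Some y.2)) l) := Injective_map_NoDup inj nodup_l.
rewrite -forget_proofs; exact: (@List.NoDup_map_inv _ _ (fun z => (z.1, sval z.2))).
Qed.

Lemma run_of_trailP t : gl_useful R None -> useful_trail t.2 ->
  is_run D (Gl R) (run_of_trail t) /\ bindingtrail_filter D (Gl R) (run_of_trail t) <->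
  is_binding_trail D R t.
Proof.
case: t => n l /= Un Ul.
rewrite /is_run /bindingtrail_filter /is_binding_trail /= last_state_run_edges //.
rewrite gl_stateE // nodup_run_edges // lang_linearise_gl prod_walk_run_edges //.
rewrite /glInit /is_walk /=.
split; first by case=> [[_ [[walk_l lbl_l path_l] final_l]] nodup_l].
by case=> walk_l [lbl_l [[path_l final_l] nodup_l]].
Qed.

End DefaultState.

Definition binding_of_edge (x : edge) : option (dE D * pos S) :=
  omap (pair x.1) (sval x.2.2).

Definition trail_of_run (r : run D (Gl R)) : btrail D := (r.1.1, pmap binding_of_edge r.2).

Lemma trail_of_run_edges q0 q l :
  useful_trail l -> pmap binding_of_edge (run_edges q0 q l) = l.
Proof.
elim: l q => [|[e a] l IH] q //= /useful_trail_cons [Ua Ul].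
by rewrite /binding_of_edge /= gl_stateE //= IH.
Qed.

Lemma useful_trail_pmap (es : seq edge) : useful_trail (pmap binding_of_edge es).
Proof.
elim: es => [|[e [[p a] [[b|] Ub]]] es IH] //= c.
by rewrite inE => /orP [/eqP ->|/IH].
Qed.

Lemma run_edges_of_walk q0 n q es : is_prod_walk_from D (Gl R) n q es ->
  run_edges q0 (sval q) (pmap binding_of_edge es) = es.
Proof.
elim: es n q => [|[e [[p a] p']] es IH] n q //= [delta [_ [_ [-> walk_es]]]].
have [b Eb ->] := gl_delta_target delta.
by rewrite /binding_of_edge /= Eb /= -Eb !gl_state_sval (IH _ _ walk_es).
Qed.

Lemma run_of_trail_of_run q0 r : is_run D (Gl R) r -> run_of_trail q0 (trail_of_run r) = r.
Proof.
case: r => [[n q] es] [init_q [walk_es _]].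
rewrite /run_of_trail /trail_of_run /= -init_q gl_state_sval.
by rewrite (run_edges_of_walk q0 walk_es).
Qed.

Lemma trail_of_run_of_trail q0 t :
  is_binding_trail D R t -> trail_of_run (run_of_trail q0 t) = t.
Proof.
case: t => n l [_ [_ [L_l _]]]; rewrite /trail_of_run /run_of_trail /=.
by rewrite trail_of_run_edges // => a; apply: useful_mem L_l.
Qed.

Lemma run_of_trail_valid q0 t : is_binding_trail D R t ->
  is_run D (Gl R) (run_of_trail q0 t) /\ bindingtrail_filter D (Gl R) (run_of_trail q0 t).
Proof.
move=> bt; case: (bt) => _ [_ [L_t _]].
by apply/run_of_trailP => // [|a]; [apply: useful_init L_t|apply: useful_mem L_t].
Qed.

Lemma trail_of_run_valid r : is_run D (Gl R) r /\ bindingtrail_filter D (Gl R) r ->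
  is_binding_trail D R (trail_of_run r).
Proof.
move=> [run_r filter_r]; have Un : gl_useful R None by case: run_r => <- _; apply: svalP.
apply/(run_of_trailP r.1.2 (t := trail_of_run r) Un (@useful_trail_pmap r.2)).
by rewrite run_of_trail_of_run.
Qed.

End Runs.

Theorem lemma28 (S : finType) (R : regex S) (D : database S) :
  bag_eq (BT_sem D R) (run_sem D (Gl R)).
Proof.
pose init_state t (bt : is_binding_trail D R t) : glQ R :=
  exist _ None (useful_init bt.2.2.1).
apply: (@bag_of_bij _ _ _ _ _
  (fun t => exist _ _ (run_of_trail_valid (init_state _ (svalP t)) (svalP t)))
  (fun r => exist _ _ (trail_of_run_valid (svalP r)))).
- by move=> [t bt]; apply/sig_inj/trail_of_run_of_trail.
- by move=> [r vr]; apply/sig_inj/run_of_trail_of_run; case: vr.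
- by move=> [t bt]; rewrite /run_sem /BT_sem /pi_run /pi_bt /= map_fst_run_edges.
Qed.
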